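(* Let $P$ be an $n$-element poset, $L$ a labeling of $P$, $x_0\in P$, $\tilde P=P\setminus\{x_0\}$ with the induced order, and $\tilde L=\mathrm{st}(L|_{\tilde P})$. Let $\gamma\ge0$ and suppose $x_0$ is not in the promotion chain of $L_\alpha$ for any $\alpha\in\{0,\ldots,\gamma-1\}$. Then $\mathrm{st}(L_\gamma|_{\tilde P})=\tilde\partial^{\gamma}(\tilde L)$, where $\tilde\partial$ denotes promotion on labelings of the $(n-1)$-element poset $\tilde P$.
   Context: A labeling of an $m$-element poset is a bijection to $[m]$. Promotion $\partial$ on an $m$-element poset: for non-maximal $y$, the $L$-successor of $y$ is the element greater than $y$ with minimal label; the promotion chain is $v_1=L^{-1}(1)$, $v_{i+1}$ the $L$-successor of $v_i$, ending at the first maximal $v_p$; $\partial(L)(y)=L(y)-1$ off the chain, $\partial(L)(v_i)=L(v_{i+1})-1$ for $i<p$, $\partial(L)(v_p)=m$. $L_\gamma=\partial^\gamma(L)$. For an injective $f:Y\to\mathbb Z$ on an $m$-element set, the standardization $\mathrm{st}(f)$ is the unique bijection $g:Y\to[m]$ with $g(y)<g(y')$ iff $f(y)<f(y')$. *)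

(* Promotion is defined for labelings of an arbitrary subset S of the
   poset, with the induced order; a labeling L : T -> nat of S is a bijection
   from S onto [1, #|S|] (values outside S are irrelevant). *)
From mathcomp Require Import all_boot all_order.
Set Implicit Arguments. Unset Strict Implicit. Unset Printing Implicit Defensive.
Import Order.TTheory.
Local Open Scope order_scope.

Section Promotion.
Variables (disp : Order.disp_t) (T : finPOrderType disp).

Definition is_labeling (S : {set T}) (L : T -> nat) : Prop :=
  {in S &, injective L} /\ (forall y, y \in S -> 1 <= L y <= #|S|)%N.

Definition succ (S : {set T}) (L : T -> nat) (y : T) : option T :=
  [pick z in S | (y < z) && [forall w in S, (y < w) ==> (L z <= L w)%N]].

Fixpoint chain_from (S : {set T}) (L : T -> nat) (fuel : nat) (y : T) : seq T :=
  y :: match fuel with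
       | 0 => [::]
       | k.+1 => match succ S L y with
                 | Some z => chain_from S L k z
                 | None => [::]
                 end
       end.

Definition promo_chain (S : {set T}) (L : T -> nat) : seq T :=
  match [pick v in S | L v == 1%N] with
  | Some v => chain_from S L #|S| v
  | None => [::]
  end.

Definition promotion (S : {set T}) (L : T -> nat) : T -> nat :=
  fun y =>
    let c := promo_chain S L in
    if y \in c then
      let i := index y c in
      if (i.+1 < size c)%N then (L (nth y c i.+1)).-1 else #|S|
    else (L y).-1.

Definition standardize (S : {set T}) (f : T -> nat) : T -> nat :=
  fun y => #|[set y' in S | (f y' < f y)%N]|.+1.

End Promotion.

From mathcomp Require Import all_boot all_order zify.
Set Implicit Arguments. Unset Strict Implicit. Unset Printing Implicit Defensive.
Import Order.TTheory.

(** Deleting [x0] commutes with one promotion step as long as [x0] is off the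
    promotion chain.  Standardization preserves the relative order of labels,
    so on elements other than [x0] the successor relation of the standardized
    labeling of [P \ x0] is that of [L]; hence both promotion chains are the
    same chain.  Promotion moves every label along that chain, so the new
    labels of the elements of [P \ x0] are in the same relative order in both
    posets, and the standardization of the promoted labeling of [P] is the
    promoted labeling of [P \ x0]. *)

Section PromotionChain.
Variables (disp : Order.disp_t) (T : finPOrderType disp).
Implicit Types (S : {set T}) (L f g : T -> nat).

Lemma chain_fromE S L k y : chain_from S L k y =
  y :: match k with 0 => [::] | k'.+1 => match succ S L y with
        Some z => chain_from S L k' z | None => [::] end end.
Proof. by case: k. Qed.

Lemma succ_mem S L y z : succ S L y = Some z -> z \in S /\ (y < z)%O.
Proof. by rewrite /succ; case: pickP => // z' /andP[zS /andP[yz _]] [<-]. Qed.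

Lemma chain_from_sub S L k y : y \in S -> {subset chain_from S L k y <= S}.
Proof.
elim: k y => [|k IHk] y yS x /=; rewrite inE; first by move/eqP->.
case/orP=> [/eqP-> // |].
case E: (succ S L y) => [z|] //.
exact: IHk (succ_mem E).1 x.
Qed.

Lemma sorted_chain_from S L k y : sorted <%O (chain_from S L k y).
Proof.
elim: k y => [|k IHk] y //=.
case E: (succ S L y) => [z|] //.
by move: (IHk z); rewrite chain_fromE /= (succ_mem E).2.
Qed.

Lemma uniq_chain_from S L k y : uniq (chain_from S L k y).
Proof.
apply: sorted_uniq (sorted_chain_from S L k y) => [a b c|a]; last exact: ltxx.
exact: lt_trans.
Qed.

Lemma size_chain_from S L k y : y \in S -> size (chain_from S L k y) <= #|S|.
Proof.
move=> yS; rewrite cardE; apply: uniq_leq_size; first exact: uniq_chain_from.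
by move=> x /(chain_from_sub yS); rewrite mem_enum.
Qed.

Lemma chain_from_fuel S L k m y : size (chain_from S L k y) <= k -> k <= m ->
  chain_from S L m y = chain_from S L k y.
Proof.
elim: k m y => [|k IHk] [|m] y //= + km.
by case: (succ S L y) => [z|] // size_le; rewrite IHk.
Qed.

Lemma promo_chain_sub S L : {subset promo_chain S L <= S}.
Proof.
by rewrite /promo_chain; case: pickP => // v /andP[vS _]; apply: chain_from_sub.
Qed.

Lemma uniq_promo_chain S L : uniq (promo_chain S L).
Proof. by rewrite /promo_chain; case: pickP => // v _; apply: uniq_chain_from. Qed.

Lemma eq_succ S f g : {in S, f =1 g} -> succ S f =1 succ S g.
Proof.
move=> fg y; apply: eq_pick => z /=.
case zS: (z \in S) => //=; congr (_ && _); apply: eq_forallb => w.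
by case wS: (w \in S) => //=; rewrite !fg.
Qed.

Lemma eq_promo_chain S f g : {in S, f =1 g} -> promo_chain S f = promo_chain S g.
Proof.
move=> fg; have eq_chain k y : chain_from S f k y = chain_from S g k y.
  elim: k y => [|k IHk] y //=.
  by rewrite (eq_succ fg); case: (succ S g y) => // z; rewrite IHk.
rewrite /promo_chain (@eq_pick _ _ [pred v in S | g v == 1]).
  by case: pickP => // v _; apply: eq_chain.
by move=> v /=; case vS: (v \in S); rewrite //= fg.
Qed.

Lemma eq_promotion S f g : {in S, f =1 g} -> {in S, promotion S f =1 promotion S g}.
Proof.
move=> fg y yS; rewrite /promotion (eq_promo_chain fg).
case: ifP => yc; last by rewrite fg.
by case: ifP => // lt; rewrite fg // (promo_chain_sub (mem_nth _ lt)).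
Qed.

Lemma ltn_standardize S f z w : z \in S -> w \in S ->
  (standardize S f z < standardize S f w) = (f z < f w).
Proof.
move=> zS wS; rewrite /standardize ltnS.
have [fzw|fwz] := ltnP (f z) (f w).
  apply: proper_card; apply/properP; split.
    by apply/subsetP => y; rewrite !inE => /andP[-> /= /ltn_trans->].
  by exists z; rewrite !inE ?zS ?ltnn ?fzw.
apply/negbTE; rewrite -leqNgt; apply: subset_leq_card.
by apply/subsetP => y; rewrite !inE => /andP[-> /= /leq_trans->].
Qed.

Lemma leq_standardize S f z w : z \in S -> w \in S ->
  (standardize S f z <= standardize S f w) = (f z <= f w).
Proof. by move=> zS wS; rewrite leqNgt ltn_standardize // -leqNgt. Qed.

Lemma standardize_labeling S f : {in S &, injective f} ->
  is_labeling S (standardize S f).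
Proof.
move=> f_inj; split.
  move=> z w zS wS Ezw; apply: f_inj => //; apply/eqP.
  by rewrite eqn_leq -(leq_standardize f zS wS) -(leq_standardize f wS zS) Ezw leqnn.
move=> y yS; apply: proper_card; apply/properP; split.
  by apply/subsetP => x; rewrite inE => /andP[].
by exists y; rewrite // inE ltnn andbF.
Qed.

Lemma labeling_perm_iota S g : is_labeling S g ->
  perm_eq (map g (enum S)) (iota 1 #|S|).
Proof.
case=> g_inj g_range.
have g_uniq : uniq (map g (enum S)).
  by rewrite map_inj_in_uniq ?enum_uniq // => a b; rewrite !mem_enum; exact: g_inj.
have g_sub : {subset map g (enum S) <= iota 1 #|S|}.
  move=> k /mapP[y]; rewrite mem_enum => /g_range /andP[g1 gS] ->.
  by rewrite mem_iota g1 add1n ltnS.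
have g_size : size (iota 1 #|S|) <= size (map g (enum S)).
  by rewrite size_iota size_map -cardE.
have [_ g_mem] := uniq_min_size g_uniq g_sub g_size.
exact: uniq_perm g_uniq (iota_uniq _ _) g_mem.
Qed.

Lemma labeling_label1 S g y : is_labeling S g -> y \in S ->
  exists2 v, v \in S & g v = 1.
Proof.
move=> gS yS; have : 1 \in map g (enum S).
  by rewrite (perm_mem (labeling_perm_iota gS)) mem_iota add1n ltnS; apply/card_gt0P; exists y.
by case/mapP => v; rewrite mem_enum => vS ->; exists v.
Qed.

Lemma count_iota1_lt t m : 0 < t <= m -> count (fun k => k < t) (iota 1 m) = t.-1.
Proof.
case/andP=> t_gt0 tm; rewrite -(subnKC (leq_trans (leq_pred t) tm)) iotaD count_cat.
rewrite (@eq_in_count _ _ predT); last first.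
  by move=> k; rewrite mem_iota add1n prednK // => /andP[].
rewrite count_predT size_iota (@eq_in_count _ _ pred0) ?count_pred0 ?addn0 //.
by move=> k; rewrite mem_iota add1n prednK // => /andP[/leq_gtF].
Qed.

Lemma standardize_id S g : is_labeling S g -> {in S, standardize S g =1 g}.
Proof.
move=> gS y yS; have /andP[gy_gt0 gy_le] := gS.2 y yS.
have card_filter : #|[set y' in S | g y' < g y]| = count (fun y' => g y' < g y) (enum S).
  rewrite -size_filter -(card_uniqP _); last by rewrite filter_uniq ?enum_uniq.
  by apply: eq_card => x; rewrite !inE mem_filter mem_enum andbC.
rewrite /standardize card_filter -(count_map g (fun k => k < g y)).
by rewrite (permP (labeling_perm_iota gS)) count_iota1_lt ?prednK ?gy_gt0.
Qed.

Lemma standardize_order_equiv S f g : is_labeling S g ->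
  {in S &, forall a b, (f a < f b) = (g a < g b)} -> {in S, standardize S f =1 g}.
Proof.
move=> gS fg y yS; rewrite -(standardize_id gS yS) /standardize.
congr _.+1; apply: eq_card => x; rewrite !inE.
by case xS: (x \in S); rewrite //= fg.
Qed.

(* [promo_src S L y] is the element whose label, decreased by one, [y] carries
   after promotion; [None] stands for the top label [#|S|]. *)
Definition promo_src S L y : option T :=
  let c := promo_chain S L in
  if y \in c then onth c (index y c).+1 else Some y.

Lemma promotionE S L y :
  promotion S L y = if promo_src S L y is Some z then (L z).-1 else #|S|.
Proof.
rewrite /promotion /promo_src; case: ifP => // yc.
case: ifP => [lt|ge]; last by rewrite onth_default // leqNgt ge.
case E: (onth _ _) => [z|]; first by rewrite -odflt_onth E.
by move: lt; rewrite -onthTE E.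
Qed.

Lemma promo_src_mem S L y z :
  promo_src S L y = Some z -> z = y \/ z \in promo_chain S L.
Proof.
rewrite /promo_src; case: ifP => _ E; last by case: E; left.
by right; apply/onthP; exists (index y (promo_chain S L)).+1.
Qed.

Lemma promo_chain_head S L y : is_labeling S L -> y \in S ->
  exists2 v, v \in S & L v = 1 /\ exists s, promo_chain S L = v :: s.
Proof.
move=> LS yS; rewrite /promo_chain; case: pickP => [v /andP[vS /eqP Lv1]|no1].
  by exists v => //; split => //; rewrite chain_fromE; eexists.
have [v vS Lv1] := labeling_label1 LS yS.
by move: (no1 v); rewrite vS Lv1.
Qed.

Lemma promo_chainE S f v : v \in S -> {in S &, injective f} -> f v = 1 ->
  promo_chain S f = chain_from S f #|S| v.
Proof.
move=> vS f_inj fv1; rewrite /promo_chain; case: pickP => [u /andP[uS /eqP fu1]|no1].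
  by rewrite (f_inj u v) ?fu1.
by move: (no1 v); rewrite vS fv1.
Qed.

Lemma promo_src_label S L y z : is_labeling S L -> y \in S ->
  promo_src S L y = Some z -> z \in S /\ 1 < L z.
Proof.
move=> LS yS Ez; have [v vS [Lv1 [s cE]]] := promo_chain_head LS yS.
have zS : z \in S by case: (promo_src_mem Ez) => [->|/promo_chain_sub].
split=> //; have /andP[Lz_gt0 _] := LS.2 z zS.
rewrite ltn_neqAle Lz_gt0 andbT; apply/eqP => Lz1.
have {Lz1} zv : z = v by apply: LS.1; rewrite // Lv1.
move: Ez; rewrite /promo_src zv; case: ifP => [_ | yc [vy]]; last first.
  by move: yc; rewrite vy cE mem_head.
have -> : Some v = onth (promo_chain S L) 0 by rewrite cE.
move=> E; have min_lt : minn 0 (index y (promo_chain S L)).+1 < size (promo_chain S L).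
  by rewrite cE.
by have := onth_inj _ _ _ (uniq_promo_chain S L) min_lt E.
Qed.

Lemma promo_src_inj S L : injective (promo_src S L).
Proof.
move=> y1 y2; rewrite /promo_src; set c := promo_chain S L.
have index_inj z1 z2 : z1 \in c -> z2 \in c ->
    onth c (index z1 c).+1 = onth c (index z2 c).+1 -> z1 = z2.
  move=> z1c z2c E; suff Eindex : index z1 c = index z2 c.
    by rewrite -(nth_index z1 z1c) Eindex nth_index.
  have [lt|ge] := ltnP (minn (index z2 c).+1 (index z1 c).+1) (size c).
    by apply: eq_add_S; apply: onth_inj _ _ _ (uniq_promo_chain S L) lt E.
  rewrite -!index_mem in z1c z2c; move: ge; rewrite leq_min => /andP[le2 le1].
  by apply: eq_add_S; apply/eqP; rewrite eqn_leq (leq_trans z1c le2) (leq_trans z2c le1).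
case: ifP => y1c; case: ifP => y2c E; first exact: index_inj.
- by case/negP: (negbT y2c); apply/onthP; exists (index y1 c).+1.
- by case/negP: (negbT y1c); apply/onthP; exists (index y2 c).+1.
- by case: E.
Qed.

Lemma promotion_labeling S L : is_labeling S L -> is_labeling S (promotion S L).
Proof.
move=> LS; have label_src y z : y \in S -> promo_src S L y = Some z ->
    [/\ z \in S, 1 < L z & L z <= #|S|].
  move=> yS /(promo_src_label LS yS) [zS Lz_gt1].
  by split=> //; have /andP[] := LS.2 z zS.
split=> [y1 y2 y1S y2S|y yS]; rewrite !promotionE.
  case E1: (promo_src S L y1) => [z1|]; case E2: (promo_src S L y2) => [z2|] E.
  - have [z1S ? ?] := label_src _ _ y1S E1; have [z2S ? ?] := label_src _ _ y2S E2.
    by apply: (@promo_src_inj S L); rewrite E1 E2; congr Some; apply: LS.1 => //; lia.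
  - by have [? ? ?] := label_src _ _ y1S E1; lia.
  - by have [? ? ?] := label_src _ _ y2S E2; lia.
  - by apply: (@promo_src_inj S L); rewrite E1 E2.
case E: (promo_src S L y) => [z|]; last first.
  by rewrite leqnn andbT; apply/card_gt0P; exists y.
by have [? ? ?] := label_src _ _ yS E; apply/andP; split; lia.
Qed.

End PromotionChain.

Section DeletePoint.
Variables (disp : Order.disp_t) (T : finPOrderType disp) (x0 : T) (L : T -> nat).
Hypothesis L_labeling : is_labeling [set: T] L.
Local Notation S' := ([set: T] :\ x0).
Local Notation L' := (standardize S' L).

Lemma label_inj : injective L.
Proof. by move=> a b; apply: L_labeling.1; rewrite inE. Qed.

Lemma labeling_setD1 : is_labeling S' L'.
Proof. by apply: standardize_labeling => a b _ _; apply: label_inj. Qed.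

Lemma succ_setD1_some y z :
  succ [set: T] L y = Some z -> z != x0 -> succ S' L' y = Some z.
Proof.
rewrite {1}/succ; case: pickP => // z1 /andP[_ /andP[yz /forallP z_min]] [<-] zx0.
have zS' : z1 \in S' by rewrite !inE zx0.
rewrite /succ; case: pickP => [z' /andP[z'S' /andP[yz' /forallP z'_min]]|no_succ].
  congr Some; apply: label_inj; apply/eqP; rewrite eqn_leq.
  have := z'_min z1; rewrite zS' yz /= leq_standardize // => ->.
  by have := z_min z'; rewrite inE yz'.
case/negP: (no_succ z1); rewrite zS' yz /=; apply/forallP => w.
apply/implyP => wS'; apply/implyP => yw.
by rewrite leq_standardize //; have := z_min w; rewrite inE yw.
Qed.

Lemma succ_setD1_none y : succ [set: T] L y = None -> succ S' L' y = None.
Proof.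
rewrite {1}/succ; case: pickP => // no_succ _.
rewrite /succ; case: pickP => // z /andP[_ /andP[yz _]].
have [m ym m_min] := arg_minnP L (yz : (fun w => (y < w)%O) z).
case/negP: (no_succ m); rewrite inE ym /=.
by apply/forallP => w; apply/implyP => _; apply/implyP; apply: m_min.
Qed.

Lemma chain_from_setD1 k y : x0 \notin chain_from [set: T] L k y ->
  chain_from S' L' k y = chain_from [set: T] L k y.
Proof.
elim: k y => [|k IHk] y //=; rewrite inE negb_or => /andP[_].
case E: (succ [set: T] L y) => [z|]; last by rewrite (succ_setD1_none E).
move=> x0_chain; have zx0 : z != x0.
  by apply: contraNneq x0_chain => <-; rewrite chain_fromE mem_head.
by rewrite (succ_setD1_some E zx0) IHk.
Qed.

Lemma promo_chain_setD1 : x0 \notin promo_chain [set: T] L ->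
  promo_chain S' L' = promo_chain [set: T] L.
Proof.
move=> x0_chain.
have [v _ [Lv1 [s cE]]] := promo_chain_head L_labeling (in_setT x0).
have vS' : v \in S'.
  by rewrite !inE andbT; apply: contraNneq x0_chain => <-; rewrite cE mem_head.
have L'v1 : L' v = 1.
  congr _.+1; apply/eqP; rewrite cards_eq0; apply/eqP/setP => y.
  by rewrite !inE Lv1 ltnNge; have /andP[->] := L_labeling.2 y (in_setT y); rewrite andbF.
rewrite (promo_chainE vS' labeling_setD1.1 L'v1).
rewrite (promo_chainE (in_setT v) L_labeling.1 Lv1) in x0_chain *.
rewrite -(chain_from_fuel (size_chain_from L' #|S'| vS') (subset_leq_card (subsetT S'))).
exact: chain_from_setD1.
Qed.

Lemma standardize_promotion_setD1 : x0 \notin promo_chain [set: T] L ->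
  {in S', standardize S' (promotion [set: T] L) =1 promotion S' L'}.
Proof.
move=> x0_chain; apply: standardize_order_equiv (promotion_labeling labeling_setD1) _.
have src_setD1 y : promo_src [set: T] L y = promo_src S' L' y.
  by rewrite /promo_src promo_chain_setD1.
have src_mem y z : y \in S' -> promo_src [set: T] L y = Some z -> z \in S'.
  move=> yS' /promo_src_mem [-> //|zc]; rewrite !inE andbT.
  by apply: contraNneq x0_chain => <-.
have bounds z : z \in S' -> [/\ 0 < L z, L z <= #|[set: T]|, 0 < L' z & L' z <= #|S'|].
  move=> zS'; have /andP[? ?] := L_labeling.2 z (in_setT z).
  by have /andP[? ?] := labeling_setD1.2 z zS'.
move=> a b aS' bS'; rewrite !promotionE -!src_setD1.
case Ea: (promo_src _ L a) => [za|]; case Eb: (promo_src _ L b) => [zb|] //.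
- have [zaS' zbS'] := (src_mem _ _ aS' Ea, src_mem _ _ bS' Eb).
  have := ltn_standardize L zaS' zbS'.
  by have [? ? ? ?] := bounds _ zaS'; have [? ? ? ?] := bounds _ zbS'; lia.
- by have [? ? ? ?] := bounds _ (src_mem _ _ aS' Ea); lia.
- by have [? ? ? ?] := bounds _ (src_mem _ _ bS' Eb); lia.
- by rewrite !ltnn.
Qed.

End DeletePoint.

Theorem mainTheorem10 (disp : Order.disp_t) (P : finPOrderType disp)
  (L : P -> nat) (x0 : P) (gamma : nat) :
  is_labeling [set: P] L ->
  (forall alpha, (alpha < gamma)%N ->
     x0 \notin promo_chain [set: P] (iter alpha (promotion [set: P]) L)) ->
  {in [set: P] :\ x0,
    standardize ([set: P] :\ x0) (iter gamma (promotion [set: P]) L)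
    =1 iter gamma (promotion ([set: P] :\ x0))
                  (standardize ([set: P] :\ x0) L)}.
Proof.
move=> L_labeling.
have iter_labeling k : is_labeling [set: P] (iter k (promotion [set: P]) L).
  by elim: k => //= k IHk; apply: promotion_labeling.
elim: gamma => [|k IHk] x0_off y yS' //=.
rewrite (standardize_promotion_setD1 (iter_labeling k) (x0_off k (ltnSn k)) yS').
apply: eq_promotion yS' => z zS'; apply: IHk => // alpha lt_alpha_k.
by apply: x0_off; rewrite ltnS ltnW.
Qed.
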